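(* Let $S$ be a multiplicatively closed subset of an $r$-lattice $L$ (with $1\in S$, $0\notin S$). Then: (1) if $j$ is a principal element and $i$ is an $S$-compact element of $L$, then $i\cdot j$ is $S$-compact; (2) if $k$ is a compact element and $i$ is an $S$-compact element of $L$, then $k\vee i$ is $S$-compact.
   Context: A multiplicative lattice is a complete lattice with a commutative, associative multiplication distributing over arbitrary joins, with $1$ as identity; $L_*$ is the set of compact elements; $(a:b)=\bigvee\{x\mid xb\le a\}$. An element $m$ is principal if $a\wedge mb=m((a:m)\wedge b)$ and $a\vee(b:m)=(am\vee b):m$ for all $a,b$. An $r$-lattice is a modular, principally generated, compactly generated multiplicative lattice with $1$ compact. A multiplicatively closed subset is a nonempty $S\subseteq L_*$ closed under multiplication. An element $a$ is $S$-compact if there exist a compact $b$ and $s\in S$ with $s\cdot a\le b\le a$. *)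

From Stdlib Require Import List.
Set Implicit Arguments.

(* A multiplicative lattice: a complete lattice (order [le], arbitrary joins
   [sup] of Prop-valued subsets) with a commutative, associative
   multiplication distributing over arbitrary joins, whose greatest element
   1 (= sup of everything) is the multiplicative identity. *)
Record MultLattice := {
  carrier :> Type;
  le : carrier -> carrier -> Prop;
  le_refl : forall a, le a a;
  le_trans : forall a b c, le a b -> le b c -> le a c;
  le_antisym : forall a b, le a b -> le b a -> a = b;
  sup : (carrier -> Prop) -> carrier;
  sup_ub : forall (A : carrier -> Prop) x, A x -> le x (sup A);
  sup_least : forall (A : carrier -> Prop) y,
      (forall x, A x -> le x y) -> le (sup A) y;
  mul : carrier -> carrier -> carrier;
  mul_comm : forall a b, mul a b = mul b a;
  mul_assoc : forall a b c, mul a (mul b c) = mul (mul a b) c;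
  mul_one : forall a, mul (sup (fun _ => True)) a = a;
  mul_sup : forall a (A : carrier -> Prop),
      mul a (sup A) = sup (fun y => exists x, A x /\ y = mul a x)
}.

Arguments le {m}.
Arguments sup {m}.
Arguments mul {m}.

Section Ops.
Variable L : MultLattice.

Definition one : L := sup (fun _ => True).
Definition zero : L := sup (fun _ => False).
Definition join (a b : L) : L := sup (fun x => x = a \/ x = b).
Definition meet (a b : L) : L := sup (fun x => le x a /\ le x b).
Definition res (a b : L) : L := sup (fun x => le (mul x b) a).

Definition compact (a : L) : Prop :=
  forall A : L -> Prop, le a (sup A) ->
    exists l : list L, (forall x, In x l -> A x) /\ le a (sup (fun x => In x l)).

Definition principal (m : L) : Prop :=
  forall a b : L,
    meet a (mul m b) = mul m (meet (res a m) b) /\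
    join a (res b m) = res (join (mul a m) b) m.

Definition modular : Prop :=
  forall a b c : L, le a c -> join a (meet b c) = meet (join a b) c.

Definition principally_generated : Prop :=
  forall a : L, a = sup (fun x => principal x /\ le x a).

Definition compactly_generated : Prop :=
  forall a : L, a = sup (fun x => compact x /\ le x a).

Definition r_lattice : Prop :=
  modular /\ principally_generated /\ compactly_generated /\ compact one.

Definition mult_closed (S : L -> Prop) : Prop :=
  (exists s, S s) /\ (forall s, S s -> compact s) /\
  (forall s t, S s -> S t -> S (mul s t)).

Definition S_compact (S : L -> Prop) (a : L) : Prop :=
  exists b s, compact b /\ S s /\ le (mul s a) b /\ le b a.

End Ops.
Arguments zero {L}.
Arguments one {L}.
Arguments join {L}.
Arguments meet {L}.
Arguments res {L}.
Arguments compact {L}.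
Arguments principal {L}.
Arguments mult_closed {L}.
Arguments S_compact {L}.

(* Both parts inherit the S-witness: if s i <= b <= i with b compact, then
   s (i j) <= b j <= i j and s (k \/ i) <= k \/ b <= k \/ i, so it suffices
   that compact elements are closed under joins (concatenate finite
   subfamilies) and under multiplication by a principal j.  For the latter let
   b j <= \/ A.  Every compact c <= j b lies below a finite subjoin F of A, so
   c <= F /\ j b = j ((F : j) /\ b) <= j (F : j); by compact generation
   j b <= j Y with Y the join of all (F : j).  The second principal identity
   cancels j up to the annihilator: b <= (Y j \/ 0) : j = Y \/ (0 : j) <= Y.
   The (F : j) form a directed family, so compactness of b gives one finite F
   with b <= (F : j), i.e. b j <= F. *)
From Stdlib Require Import List.

Section MultLatticeFacts.

Variable L : MultLattice.
Implicit Types a b c i j k s x y : L.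

Definition finsup (l : list L) : L := sup (fun x => In x l).

Lemma sup_mono (A B : L -> Prop) : (forall x, A x -> B x) -> le (sup A) (sup B).
Proof. intro HAB. apply sup_least. intros x Hx. apply sup_ub. auto. Qed.

Lemma finsup_incl l l' : incl l l' -> le (finsup l) (finsup l').
Proof. intro Hll'. apply sup_mono. exact Hll'. Qed.

Lemma sup_le_eq b : sup (fun x => le x b) = b.
Proof.
  apply le_antisym.
  - apply sup_least. auto.
  - apply sup_ub. apply le_refl.
Qed.

Lemma mul_mono_r a b c : le a b -> le (mul c a) (mul c b).
Proof.
  intro Hab. rewrite <- (sup_le_eq b), mul_sup.
  apply sup_ub. exists a. auto.
Qed.

Lemma mul_mono_l a b c : le a b -> le (mul a c) (mul b c).
Proof. intro Hab. rewrite (mul_comm _ a), (mul_comm _ b). apply mul_mono_r. exact Hab. Qed.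

Lemma zero_le a : le zero a.
Proof. apply sup_least. intros x []. Qed.

Lemma le_one a : le a one.
Proof. apply sup_ub. exact I. Qed.

Lemma mul_le_r s a : le (mul s a) a.
Proof.
  apply le_trans with (mul one a).
  - apply mul_mono_l. apply le_one.
  - rewrite mul_one. apply le_refl.
Qed.

Lemma meet_le_l a b : le (meet a b) a.
Proof. apply sup_least. intros x [Hxa _]. exact Hxa. Qed.

Lemma le_meet x a b : le x a -> le x b -> le x (meet a b).
Proof. intros Hxa Hxb. apply sup_ub. auto. Qed.

Lemma le_join_l a b : le a (join a b).
Proof. apply sup_ub. auto. Qed.

Lemma le_join_r a b : le b (join a b).
Proof. apply sup_ub. auto. Qed.

Lemma join_le a b c : le a c -> le b c -> le (join a b) c.
Proof. intros Hac Hbc. apply sup_least. intros x [-> | ->]; assumption. Qed.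

Lemma join_mono a a' b b' : le a a' -> le b b' -> le (join a b) (join a' b').
Proof.
  intros Ha Hb. apply join_le.
  - apply le_trans with a'; [exact Ha | apply le_join_l].
  - apply le_trans with b'; [exact Hb | apply le_join_r].
Qed.

Lemma mul_join_le s a b : le (mul s (join a b)) (join (mul s a) (mul s b)).
Proof.
  unfold join at 1. rewrite mul_sup. apply sup_least.
  intros y [x [[-> | ->] ->]]; [apply le_join_l | apply le_join_r].
Qed.

Lemma le_res x a j : le (mul x j) a -> le x (res a j).
Proof. intro Hxj. apply sup_ub. exact Hxj. Qed.

Lemma res_mul_le a j : le (mul (res a j) j) a.
Proof.
  unfold res. rewrite mul_comm, mul_sup. apply sup_least.
  intros y [x [Hx ->]]. rewrite mul_comm. exact Hx.
Qed.

Lemma res_mono a a' j : le a a' -> le (res a j) (res a' j).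
Proof.
  intro Ha. apply le_res. apply le_trans with a; [apply res_mul_le | exact Ha].
Qed.

Lemma compactly_generated_le a y :
  compactly_generated L -> (forall c, compact c -> le c a -> le c y) -> le a y.
Proof.
  intros CG Hc. rewrite (CG a). apply sup_least. intros c [Hcc Hca]. auto.
Qed.

Lemma principal_meet_mul j a b :
  principal j -> meet a (mul j b) = mul j (meet (res a j) b).
Proof. intro Hj. apply Hj. Qed.

Lemma principal_mul_cancel j x y :
  principal j -> le (mul x j) (mul y j) -> le x (join y (res zero j)).
Proof.
  intros Hj Hxy. destruct (Hj y zero) as [_ ->].
  apply le_res. apply le_trans with (mul y j); [exact Hxy | apply le_join_l].
Qed.

Lemma compact_le_directed_sup (A : L -> Prop) (f : list L -> L) b :
  compact b -> (forall l l', incl l l' -> le (f l) (f l')) ->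
  le b (sup (fun z => exists l, (forall x, In x l -> A x) /\ z = f l)) ->
  exists l, (forall x, In x l -> A x) /\ le b (f l).
Proof.
  intros Hb Hf Hbsup.
  destruct (Hb _ Hbsup) as [l0 [Hl0 Hbl0]].
  assert (Hbound : exists l, (forall x, In x l -> A x) /\
                             forall z, In z l0 -> le z (f l)).
  { clear Hbl0. induction l0 as [|z l0 IH].
    - exists nil. split; intros ? [].
    - destruct IH as [l' [Hl' Hl0l']]; [intros x Hx; apply Hl0; now right |].
      destruct (Hl0 z (or_introl eq_refl)) as [l [Hl ->]].
      exists (l ++ l'). split.
      + intros x Hx. apply in_app_or in Hx. destruct Hx; auto.
      + intros z [<- | Hz].
        * apply Hf. apply incl_appl, incl_refl.
        * apply le_trans with (f l'); [auto |]. apply Hf. apply incl_appr, incl_refl. }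
  destruct Hbound as [l [Hl Hl0l]]. exists l. split; [exact Hl |].
  apply le_trans with (finsup l0); [exact Hbl0 |]. apply sup_least. exact Hl0l.
Qed.

Lemma compact_join k b : compact k -> compact b -> compact (join k b).
Proof.
  intros Hk Hb A HA.
  destruct (Hk A) as [lk [HlkA Hklk]].
  { apply le_trans with (join k b); [apply le_join_l | exact HA]. }
  destruct (Hb A) as [lb [HlbA Hblb]].
  { apply le_trans with (join k b); [apply le_join_r | exact HA]. }
  exists (lk ++ lb). split.
  - intros x Hx. apply in_app_or in Hx. destruct Hx; auto.
  - apply join_le.
    + apply le_trans with (finsup lk); [exact Hklk |]. apply finsup_incl, incl_appl, incl_refl.
    + apply le_trans with (finsup lb); [exact Hblb |]. apply finsup_incl, incl_appr, incl_refl.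
Qed.

Lemma compact_mul_principal b j :
  compactly_generated L -> compact b -> principal j -> compact (mul b j).
Proof.
  intros CG Hb Hj A HA.
  set (Fres := fun l => res (finsup l) j).
  set (Y := sup (fun z => exists l, (forall x, In x l -> A x) /\ z = Fres l)).
  assert (Hjb : le (mul j b) (mul j Y)).
  { apply compactly_generated_le; [exact CG |]. intros c Hc Hcjb.
    destruct (Hc A) as [l [HlA Hcl]].
    { apply le_trans with (mul j b); [exact Hcjb |]. rewrite mul_comm. exact HA. }
    apply le_trans with (meet (finsup l) (mul j b)); [apply le_meet; assumption |].
    rewrite principal_meet_mul by exact Hj.
    apply mul_mono_r. apply le_trans with (Fres l); [apply meet_le_l |].
    apply sup_ub. exists l. auto. }
  assert (HbY : le b Y).
  { apply le_trans with (join Y (res zero j)).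
    - apply principal_mul_cancel; [exact Hj |].
      rewrite (mul_comm _ b), (mul_comm _ Y). exact Hjb.
    - apply join_le; [apply le_refl |]. apply le_trans with (Fres nil).
      + apply res_mono. apply zero_le.
      + apply sup_ub. exists nil. split; [intros ? [] | reflexivity]. }
  destruct (compact_le_directed_sup A Fres b Hb) as [l [HlA Hbl]]; [| exact HbY |].
  - intros l l' Hll'. apply res_mono. apply finsup_incl. exact Hll'.
  - exists l. split; [exact HlA |].
    apply le_trans with (mul (Fres l) j); [apply mul_mono_l; exact Hbl | apply res_mul_le].
Qed.

Lemma S_compact_mul_principal (S : L -> Prop) i j :
  compactly_generated L -> principal j -> S_compact S i -> S_compact S (mul i j).
Proof.
  intros CG Hj [b [s [Hb [Hs [Hsib Hbi]]]]].
  exists (mul b j), s. repeat split.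
  - apply compact_mul_principal; assumption.
  - exact Hs.
  - rewrite mul_assoc. apply mul_mono_l. exact Hsib.
  - apply mul_mono_l. exact Hbi.
Qed.

Lemma S_compact_join_compact (S : L -> Prop) k i :
  compact k -> S_compact S i -> S_compact S (join k i).
Proof.
  intros Hk [b [s [Hb [Hs [Hsib Hbi]]]]].
  exists (join k b), s. repeat split.
  - apply compact_join; assumption.
  - exact Hs.
  - apply le_trans with (join (mul s k) (mul s i)); [apply mul_join_le |].
    apply join_mono; [apply mul_le_r | exact Hsib].
  - apply join_mono; [apply le_refl | exact Hbi].
Qed.

End MultLatticeFacts.

Theorem mainTheorem7 (L : MultLattice) (S : L -> Prop) :
  r_lattice L -> mult_closed S -> S one -> ~ S zero ->
  (forall i j : L, principal j -> S_compact S i -> S_compact S (mul i j)) /\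
  (forall k i : L, compact k -> S_compact S i -> S_compact S (join k i)).
Proof.
  intros [_ [_ [CG _]]] _ _ _. split.
  - intros i j Hj Hi. apply S_compact_mul_principal; assumption.
  - intros k i Hk Hi. apply S_compact_join_compact; assumption.
Qed.
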